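(* Let $\Omega\subset\mathbb{R}^n$ be connected, bounded and of class $C^\infty$, fix $\alpha\in(0,1)$ and distinct integers $n_1,\dots,n_K$. Let $(a^{ij}_\epsilon),(b^i_\epsilon),(\rho_\epsilon)\in\mathcal{E}_M(\overline{\Omega})$ satisfy for all $\epsilon<1$: $a^{ij}_\epsilon=a^{ji}_\epsilon$, $a^{ij}_\epsilon\xi_i\xi_j\ge\lambda_\epsilon|\xi|^2\ge C_1\epsilon^{a_1}|\xi|^2$; for all $k$, $|a^{ij}_\epsilon|_{k,\alpha;\Omega},|b^i_\epsilon|_{k,\alpha;\Omega}\le\Lambda_{k,\epsilon}\le C_2(k)\epsilon^{a_2(k)}$; $\{n_i:n_i<0\}\ne\emptyset$, $n_1=\min\{n_i:n_i<0\}$, $b^1_\epsilon\le-C_3\epsilon^{a_3}$; $\{n_i:n_i>0\}\ne\emptyset$, $n_K=\max\{n_i:n_i>0\}$, $b^K_\epsilon\ge C_4\epsilon^{a_4}$; $\rho_\epsilon\ge C_5\epsilon^{a_5}$, with positive constants $C_1,C_2(k),\dots,C_5$ and reals $a_1,a_2(k),\dots,a_5$ independent of $\epsilon$. Define $$\alpha'_\epsilon=\sup\Big\{c>0:\sum_{i=1}^K\sup_{x\in\overline{\Omega}}b^i_\epsilon(x)y^{n_i}<0\ \forall y\in(0,c)\Big\},\quad \beta'_\epsilon=\inf\Big\{c\in\mathbb{R}:\sum_{i=1}^K\inf_{x\in\overline{\Omega}}b^i_\epsilon(x)y^{n_i}>0\ \forall y\in(c,\infty)\Big\},$$ $\alpha_\epsilon=\min\{\alpha'_\epsilon,\inf_{\partial\Omega}\rho_\epsilon\}$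 and $\beta_\epsilon=\max\{\beta'_\epsilon,\sup_{\partial\Omega}\rho_\epsilon\}$. Then the nets $(\alpha_\epsilon)$, $(\beta_\epsilon)$, $(1/\alpha_\epsilon)$ and $(1/\beta_\epsilon)$ belong to $\overline{\mathbb{C}}$, the ring of generalized constants.
   Context: $\overline{\mathbb{C}}$ is the quotient of the set of nets $(r_\epsilon)_{\epsilon\in(0,1]}$ of complex numbers with $|r_\epsilon|=O(\epsilon^a)$ as $\epsilon\to0$ for some $a\in\mathbb{R}$ (moderate nets), by the nets with $|r_\epsilon|=O(\epsilon^a)$ for every $a\in\mathbb{R}$; a net ''belongs to $\overline{\mathbb{C}}$'' if it is moderate. Hölder norm: $|u|_{k,\alpha;\Omega}=\sum_{j\le k}\sup_{|\beta|=j}\sup_{\overline{\Omega}}|D^\beta u|+\sup_{|\beta|=k}\sup_{x\ne y}|D^\beta u(x)-D^\beta u(y)|/|x-y|^\alpha$. $\mathcal{E}_M(\overline{\Omega})$ is the set of nets $(u_\epsilon)_{\epsilon\in(0,1]}\subset C^\infty(\overline{\Omega})$ such that for every $k$ there is $a\in\mathbb{R}$ with $\sup_{|\beta|\le k,x\in\overline{\Omega}}|D^\beta u_\epsilon|=O(\epsilon^a)$. *)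

From HB Require Import structures.
From mathcomp Require Import all_boot all_order all_algebra.
From mathcomp Require Import all_classical all_reals all_analysis.
Set Implicit Arguments. Unset Strict Implicit. Unset Printing Implicit Defensive.
Import Order.TTheory GRing.Theory Num.Theory.
Import numFieldNormedType.Exports.
Local Open Scope classical_set_scope.
Local Open Scope ring_scope.

Section Defs.
Variables (R : realType) (n : nat).
Notation pt := 'rV[R]_n.

Definition unitvec (i : 'I_n) : pt := delta_mx 0 i.

Definition partial (i : 'I_n) (u : pt -> R) : pt -> R :=
  fun x => derive u x (unitvec i).

Definition mlen (beta : 'I_n -> nat) : nat := (\sum_(i < n) beta i)%N.

Definition Dmulti (beta : 'I_n -> nat) (u : pt -> R) : pt -> R :=
  foldr (fun i g => iter (beta i) (partial i) g) u (enum 'I_n).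

Definition enorm (x : pt) : R := Num.sqrt (\sum_(i < n) x 0 i ^+ 2).

Definition bdry (A : set pt) : set pt := closure A `\` interior A.

Definition smooth_on (A : set pt) (u : pt -> R) : Prop :=
  forall beta x, A x ->
    {for x, continuous (Dmulti beta u)} /\
    (forall i, derivable (Dmulti beta u) x (unitvec i)).

Definition Cinf_closure (Omega : set pt) (u : pt -> R) : Prop :=
  {within closure Omega, continuous u} /\ smooth_on Omega u /\
  forall beta, exists g : pt -> R,
    {within closure Omega, continuous g} /\ {in Omega, Dmulti beta u =1 g}.

Definition smooth_map_on (A : set pt) (psi : pt -> pt) : Prop :=
  forall j : 'I_n, smooth_on A (fun x => psi x 0 j).

(* Omega is a bounded connected domain of class C^infty
   (Gilbarg-Trudinger definition: boundary locally straightened by a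
   C^infty diffeomorphism onto the half space x_n > 0) *)
Definition last_coord (y : pt) (P : R -> Prop) : Prop :=
  forall j : 'I_n, nat_of_ord j = n.-1 -> P (y 0 j).

Definition smooth_boundary (Omega : set pt) : Prop :=
  forall x0, bdry Omega x0 ->
    exists (r : R) (psi phi : pt -> pt) (D : set pt),
      0 < r /\ open D /\
      (forall x, ball x0 r x -> D (psi x) /\ phi (psi x) = x) /\
      (forall y, D y -> ball x0 r (phi y) /\ psi (phi y) = y) /\
      (forall x, ball x0 r x -> Omega x -> last_coord (psi x) (fun t => 0 < t)) /\
      (forall x, ball x0 r x -> bdry Omega x -> last_coord (psi x) (fun t => t = 0)) /\
      smooth_map_on (ball x0 r) psi /\ smooth_map_on D phi.

Definition smooth_domain (Omega : set pt) : Prop :=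
  open Omega /\ Omega !=set0 /\ connected Omega /\ bounded_set Omega /\
  smooth_boundary Omega.

(* Hoelder norm |u|_{k,alpha;Omega}, as an extended real (possibly +oo).
   Suprema over closure Omega of (continuous extensions of) derivatives are
   taken over Omega, which gives the same value. *)
Definition holder_norm (Omega : set pt) (k : nat) (al : R) (u : pt -> R)
  : \bar R :=
  (\sum_(j < k.+1)
     ereal_sup [set z | exists beta x, mlen beta = j /\ Omega x /\
                         z = (`|Dmulti beta u x|)%:E]
   + ereal_sup [set z | exists beta x y, mlen beta = k /\ Omega x /\ Omega y /\
                         x != y /\
                         z = (`|Dmulti beta u x - Dmulti beta u y|
                               / powR (enorm (x - y)) al)%:E])%E.

Definition EMnet (Omega : set pt) (u : R -> pt -> R) : Prop :=
  (forall eps, 0 < eps <= 1 -> Cinf_closure Omega (u eps)) /\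
  forall k : nat, exists (a C eta : R), 0 < eta /\
    forall eps, 0 < eps < eta -> eps <= 1 ->
      forall beta x, (mlen beta <= k)%N -> Omega x ->
        `|Dmulti beta (u eps) x| <= C * powR eps a.

End Defs.

(* a net (r_eps) of reals is moderate, i.e. belongs to the ring of
   generalized constants: |r_eps| = O(eps^a) as eps -> 0 for some a *)
Definition moderate {R : realType} (r : R -> R) : Prop :=
  exists (a C eta : R), 0 < eta /\
    forall eps, 0 < eps < eta -> eps <= 1 -> `|r eps| <= C * powR eps a.

Section Bounds.
Variables (R : realType) (n : nat).
Notation pt := 'rV[R]_n.

Definition sup_on (A : set pt) (f : pt -> R) : R := sup [set f x | x in A].
Definition inf_on (A : set pt) (f : pt -> R) : R := inf [set f x | x in A].

Definition alpha' (Omega : set pt) (K : nat) (ni : nat -> int)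
    (b : nat -> R -> pt -> R) (eps : R) : R :=
  sup [set c | 0 < c /\ forall y, 0 < y < c ->
         \sum_(1 <= i < K.+1) sup_on (closure Omega) (b i eps) * y ^ ni i < 0].

Definition beta' (Omega : set pt) (K : nat) (ni : nat -> int)
    (b : nat -> R -> pt -> R) (eps : R) : R :=
  inf [set c | forall y, c < y ->
         0 < \sum_(1 <= i < K.+1) inf_on (closure Omega) (b i eps) * y ^ ni i].

Definition alpha_net Omega K ni b (rho : R -> pt -> R) (eps : R) : R :=
  Num.min (alpha' Omega K ni b eps) (inf_on (bdry Omega) (rho eps)).

Definition beta_net Omega K ni b (rho : R -> pt -> R) (eps : R) : R :=
  Num.max (beta' Omega K ni b eps) (sup_on (bdry Omega) (rho eps)).
End Bounds.

Set Warnings "-notation-overridden,-ambiguous-paths,-notation-incompatible-prefix".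
From HB Require Import structures.
From mathcomp Require Import all_boot all_order all_algebra.
From mathcomp Require Import all_classical all_reals all_analysis.
From mathcomp Require Import zify ring lra.
Set Implicit Arguments. Unset Strict Implicit. Unset Printing Implicit Defensive.
Import Order.TTheory GRing.Theory Num.Theory.
Import numFieldNormedType.Exports.
Local Open Scope classical_set_scope.
Local Open Scope ring_scope.

(* For each small eps all coefficients b^i_eps and rho_eps are bounded on the closure by one
   moderate B_eps = C eps^a, while b^1_eps <= -c3 and b^K_eps >= c4 with c3 = C3 eps^a3 and
   c4 = C4 eps^a4.  In the Laurent polynomial sum_i s_i y^(n_i) built from the sups (or infs)
   of the coefficients, the most singular term wins near 0 and the highest power wins at
   infinity, so it is negative on (0, min(1, c3/(K B))/2] and positive on
   [2 + K B/c4, oo).  Hence alpha'_eps and beta'_eps lie between these two quantities, and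
   rho_eps lies between C5 eps^a5 and B_eps on the boundary.  Nets bounded by eps-powers are
   closed under sums, products and inverses of C eps^a, which gives all four estimates. *)

Section ModerateNets.
Variable R : realType.
Implicit Types (f g lo hi x : R -> R) (a C e : R).

Lemma le_powR_bound e a a' C C' : 0 < e <= 1 -> a' <= a -> `|C| <= C' ->
  C * powR e a <= C' * powR e a'.
Proof.
move=> e01 aa' CC'; have C'0 : 0 <= C' := le_trans (normr_ge0 C) CC'.
apply: (@le_trans _ _ (C' * powR e a)).
  by apply: ler_wpM2r; [exact: powR_ge0 | exact: le_trans (ler_norm C) CC'].
by apply: ler_wpM2l => //; exact: ger_powR.
Qed.

Lemma moderate_le f g : moderate f ->
  (exists2 eta : R, 0 < eta &
     forall e, 0 < e < eta -> e <= 1 -> `|g e| <= `|f e|) ->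
  moderate g.
Proof.
move=> [a [C [eta [eta0 Hf]]]] [eta' eta'0 Hgf].
exists a, C, (Num.min eta eta'); split; first by rewrite lt_min eta0.
move=> e /andP[e0]; rewrite lt_min => /andP[e1 e2] e3.
by apply: le_trans (Hgf e _ e3) (Hf e _ e3); rewrite e0.
Qed.

Lemma moderate_cst C : moderate (fun _ => C).
Proof. by exists 0, `|C|, 1; split => // e _ _; rewrite powRr0 mulr1. Qed.

Lemma moderate_pow C a : moderate (fun e => C * powR e a).
Proof.
exists a, `|C|, 1; split => // e _ _.
by rewrite normrM (ger0_norm (powR_ge0 _ _)).
Qed.

Lemma moderate_inv_pow C a : moderate (fun e => (C * powR e a)^-1).
Proof.
exists (- a), `|C|^-1, 1; split => // e _ _.
by rewrite invfM normrM normfV powRN ger0_norm // invr_ge0 powR_ge0.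
Qed.

Lemma moderate_add f g : moderate f -> moderate g -> moderate (fun e => f e + g e).
Proof.
move=> [a [C [eta [eta0 Hf]]]] [a' [C' [eta' [eta'0 Hg]]]].
exists (Num.min a a'), (`|C| + `|C'|), (Num.min eta eta'); split.
  by rewrite lt_min eta0.
move=> e /andP[e0]; rewrite lt_min => /andP[e1 e2] e3.
have e01 : 0 < e <= 1 by rewrite e0.
apply: le_trans (ler_normD _ _) _; rewrite mulrDl; apply: lerD.
  by apply: le_trans (Hf e _ e3) (le_powR_bound e01 _ _); rewrite ?e0 ?ge_min ?lexx.
by apply: le_trans (Hg e _ e3) (le_powR_bound e01 _ _); rewrite ?e0 ?ge_min ?lexx ?orbT.
Qed.

Lemma moderate_mul f g : moderate f -> moderate g -> moderate (fun e => f e * g e).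
Proof.
move=> [a [C [eta [eta0 Hf]]]] [a' [C' [eta' [eta'0 Hg]]]].
exists (a + a'), (C * C'), (Num.min eta eta'); split; first by rewrite lt_min eta0.
move=> e /andP[e0]; rewrite lt_min => /andP[e1 e2] e3.
have hf := Hf e (ltac:(by rewrite e0)) e3; have hg := Hg e (ltac:(by rewrite e0)) e3.
rewrite powRD; last by apply/implyP => _; rewrite gt_eqF.
rewrite normrM mulrACA.
by apply: ler_pM => //; apply: le_trans hg.
Qed.

(* [x e = 0] allows for the junk value [0^-1 = 0]. *)
Lemma moderate_sandwich lo hi x (eta : R) : 0 < eta ->
  moderate hi -> moderate (fun e => (lo e)^-1) ->
  (forall e, 0 < e < eta -> [/\ 0 < lo e, x e = 0 \/ lo e <= x e & x e <= hi e]) ->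
  moderate x /\ moderate (fun e => (x e)^-1).
Proof.
move=> eta0 mhi mlo bnd.
have x_ge0 e : 0 < e < eta -> 0 <= x e.
  by case/bnd => lo0 [->|/(lt_le_trans lo0)/ltW].
split.
- apply: (moderate_le mhi); exists eta => // e he _.
  have [_ _ xhi] := bnd e he; have x0 := x_ge0 e he.
  by rewrite !ger0_norm // (le_trans x0).
- apply: (moderate_le mlo); exists eta => // e he _.
  have [lo0 [->|lox] _] := bnd e he; first by rewrite invr0 normr0.
  have x0 := lt_le_trans lo0 lox.
  rewrite !ger0_norm ?invr_ge0 ?(ltW lo0) ?(ltW x0) //.
  by rewrite lef_pV2 ?posrE.
Qed.

End ModerateNets.

Section EMBounds.
Variables (R : realType) (n : nat).
Notation pt := 'rV[R]_n.

Definition moderate_on (A : set pt) (u : R -> pt -> R) : Prop :=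
  exists a C eta : R, 0 < eta /\
    forall e, 0 < e < eta -> e <= 1 -> forall x, A x -> `|u e x| <= C * powR e a.

Lemma closure_norm_le (A : set pt) (f : pt -> R) (M : R) :
  {within closure A, continuous f} -> (forall x, A x -> `|f x| <= M) ->
  forall x, closure A x -> `|f x| <= M.
Proof.
move=> cf fM x Ax; rewrite leNgt; apply/negP => Mfx.
have cfx := (@subspace_continuousP _ (closure A) _ f).1 cf x Ax.
have near_gt : \forall t \near within (closure A) (nbhs x), M < `|f t|.
  exact: (cvgr_gt (`|f x|) (cvg_norm cfx)).
have [z [Az Mfz]] := Ax _ near_gt.
by move: (Mfz (subset_closure Az)); rewrite ltNge fM.
Qed.

Lemma Dmulti0 (u : pt -> R) : Dmulti (fun _ => 0%N) u = u.
Proof. by rewrite /Dmulti; elim: (enum 'I_n). Qed.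

Lemma mlen0 : mlen (fun _ : 'I_n => 0%N) = 0%N.
Proof. by rewrite /mlen big1. Qed.

Lemma EMnet_moderate_on (Omega : set pt) (u : R -> pt -> R) :
  EMnet Omega u -> moderate_on (closure Omega) u.
Proof.
move=> [smooth_u est]; have [a [C [eta [eta0 Hu]]]] := est 0%N.
exists a, C, eta; split => // e he e1.
have [cont_u _] := smooth_u e (ltac:(by case/andP: he => -> _)).
apply: closure_norm_le cont_u _ => x Ox.
by have := Hu e he e1 (fun _ => 0%N) x; rewrite Dmulti0 mlen0; apply.
Qed.

Lemma moderate_on_family (A : set pt) (N : nat) (F : nat -> R -> pt -> R) :
  (forall i, (i <= N)%N -> moderate_on A (F i)) ->
  exists a C eta : R, 0 < C /\ 0 < eta /\
    forall i, (i <= N)%N -> forall e, 0 < e < eta -> e <= 1 ->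
      forall x, A x -> `|F i e x| <= C * powR e a.
Proof.
elim: N => [|N IH] HF.
  have [a [C [eta [eta0 H0]]]] := HF 0%N (leqnn 0).
  exists a, (`|C| + 1), eta; split; first by rewrite ltr_wpDl.
  split => // i; rewrite leqn0 => /eqP -> e he e1 x Ax.
  apply: le_trans (H0 e he e1 x Ax) (le_powR_bound _ _ _) => //.
    by case/andP: he => -> _.
  by rewrite lerDl.
have [a1 [C1 [eta1 [C1_gt0 [eta1_gt0 H1]]]]] := IH (fun i hi => HF i (leqW hi)).
have [a2 [C2 [eta2 [eta2_gt0 H2]]]] := HF N.+1 (leqnn _).
exists (Num.min a1 a2), (C1 + `|C2|), (Num.min eta1 eta2).
split; first by rewrite ltr_wpDr.
split; first by rewrite lt_min eta1_gt0.
move=> i hi e /andP[e0]; rewrite lt_min => /andP[e1 e2] e_le1 x Ax.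
have e01 : 0 < e <= 1 by rewrite e0.
move: hi; rewrite leq_eqVlt ltnS => /orP[/eqP ->|hi].
  apply: le_trans (H2 e _ e_le1 x Ax) (le_powR_bound e01 _ _); rewrite ?e0 //.
    by rewrite ge_min lexx orbT.
  by rewrite lerDr ltW.
apply: le_trans (H1 i hi e _ e_le1 x Ax) (le_powR_bound e01 _ _); rewrite ?e0 //.
  by rewrite ge_min lexx.
by rewrite gtr0_norm // lerDl.
Qed.

End EMBounds.

Section RealBounds.
Variable R : realType.

Lemma norm_sup_le (E : set R) (B : R) : 0 <= B ->
  (forall y, E y -> `|y| <= B) -> `|sup E| <= B.
Proof.
move=> B0 EB; have [[y0 Ey0]|E0] := pselect (E !=set0); last first.
  by rewrite (_ : E = set0) ?sup0 ?normr0 //; apply/seteqP; split => // y Ey; apply: E0; exists y.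
have ubE : ubound E B by move=> y /EB /(le_trans (ler_norm y)).
rewrite ler_norml; apply/andP; split; last by apply: ge_sup => //; exists y0.
apply: le_trans (ub_le_sup _ Ey0); last by exists B.
by have := EB y0 Ey0; rewrite ler_norml => /andP[].
Qed.

Lemma norm_inf_le (E : set R) (B : R) : 0 <= B ->
  (forall y, E y -> `|y| <= B) -> `|inf E| <= B.
Proof.
move=> B0 EB; rewrite /inf normrN; apply: norm_sup_le => // y [x Ex <-].
by rewrite normrN; exact: EB.
Qed.

Lemma ler_wiXz2l (y : R) (k m : int) : 0 < y <= 1 -> k <= m -> y ^ m <= y ^ k.
Proof.
move=> /andP[y0 y1] km; have inv_pow j : y ^ j = y^-1 ^ (- j) by rewrite exprz_inv opprK.
by rewrite !inv_pow; apply: ler_weXz2l; rewrite ?invf_ge1 ?lerN2.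
Qed.

Lemma ler_sum_nat_bigD1 (F : nat -> R) (K j : nat) (G : R) :
  (1 <= j <= K)%N -> 0 <= G ->
  (forall i, (1 <= i <= K)%N -> i != j -> F i <= G) ->
  \sum_(1 <= i < K.+1) F i <= F j + K%:R * G.
Proof.
move=> hj G0 FG.
rewrite (bigD1_seq j) ?iota_uniq ?mem_index_iota ?ltnS //= lerD2l.
apply: (@le_trans _ _ (\sum_(i <- index_iota 1 K.+1) G)).
  rewrite big_mkcond /= big_seq [X in _ <= X]big_seq.
  apply: ler_sum => i; rewrite mem_index_iota ltnS => hi.
  by case: ifP => // /FG; apply.
by rewrite sumr_const_nat subn1 /= mulr_natl.
Qed.

End RealBounds.

Section LaurentSums.
Variables (R : realType) (K : nat) (ni : nat -> int) (u : nat -> R) (B c3 c4 : R).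
Hypothesis K_ge1 : (1 <= K)%N.
Hypothesis ni_inj : forall i j, (1 <= i <= K)%N -> (1 <= j <= K)%N ->
  ni i = ni j -> i = j.
Hypothesis ni1_min : ni 1%N < 0 /\
  forall i, (1 <= i <= K)%N -> ni i < 0 -> ni 1%N <= ni i.
Hypothesis niK_max : 0 < ni K /\
  forall i, (1 <= i <= K)%N -> 0 < ni i -> ni i <= ni K.
Hypotheses (B_gt0 : 0 < B) (c3_gt0 : 0 < c3) (c4_gt0 : 0 < c4).
Hypothesis u_bounded : forall i, (1 <= i <= K)%N -> `|u i| <= B.
Hypotheses (u1_neg : u 1%N <= - c3) (uK_pos : c4 <= u K).

Definition root_lb : R := Num.min 1 (c3 / (K%:R * B)) / 2.
Definition root_ub : R := 2 + K%:R * B / c4.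

Local Notation laurent y := (\sum_(1 <= i < K.+1) u i * y ^ ni i).

Let KB_gt0 : 0 < K%:R * B. Proof. by rewrite mulr_gt0 // ltr0n. Qed.

Lemma ni1_lt i : (1 <= i <= K)%N -> i != 1%N -> ni 1%N + 1 <= ni i.
Proof.
move=> hi i1; have ni_neq : ni i != ni 1%N.
  by apply: contra i1 => /eqP /ni_inj ->; rewrite ?K_ge1.
case: ni1_min => n1_lt0 n1_le; case: (ltP (ni i) 0) => [/(n1_le _ hi)|]; lia.
Qed.

Lemma niK_gt i : (1 <= i <= K)%N -> i != K -> ni i <= ni K - 1.
Proof.
move=> hi iK; have ni_neq : ni i != ni K.
  by apply: contra iK => /eqP /ni_inj ->; rewrite ?K_ge1 ?leqnn.
case: niK_max => nK_gt0 nK_ge; case: (ltP 0 (ni i)) => [/(nK_ge _ hi)|]; lia.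
Qed.

Lemma laurent_lt0 (y : R) : 0 < y <= 1 -> y < c3 / (K%:R * B) -> laurent y < 0.
Proof.
move=> y01 y_small; have y0 : 0 < y by case/andP: y01.
have p0 : 0 < y ^ ni 1%N by exact: exprz_gt0.
have split_sum : laurent y <= u 1%N * y ^ ni 1%N + K%:R * (B * y ^ (ni 1%N + 1)).
  apply: ler_sum_nat_bigD1; rewrite ?K_ge1 ?mulr_ge0 ?exprz_ge0 ?(ltW B_gt0) ?(ltW y0) //.
  move=> i hi i1; apply: le_trans (ler_norm _) _.
  rewrite normrM (ger0_norm (exprz_ge0 _ (ltW y0))).
  by apply: ler_pM; rewrite ?exprz_ge0 ?(ltW y0) ?u_bounded ?ler_wiXz2l ?ni1_lt.
have lead : u 1%N * y ^ ni 1%N <= - c3 * y ^ ni 1%N by rewrite ler_pM2r.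
have rest : K%:R * B * y * y ^ ni 1%N < c3 * y ^ ni 1%N.
  by rewrite ltr_pM2r // mulrC -ltr_pdivlMr.
have rest_eq : K%:R * (B * y ^ (ni 1%N + 1)) = K%:R * B * y * y ^ ni 1%N.
  by rewrite exprzDr ?unitfE ?gt_eqF // expr1z; ring.
lra.
Qed.

Lemma laurent_gt0 (y : R) : 1 <= y -> K%:R * B / c4 < y -> 0 < laurent y.
Proof.
move=> y1 y_large; have y0 : 0 < y by apply: lt_le_trans y1.
have p0 : 0 < y ^ (ni K - 1) by exact: exprz_gt0.
have split_sum : \sum_(1 <= i < K.+1) - (u i * y ^ ni i) <=
    - (u K * y ^ ni K) + K%:R * (B * y ^ (ni K - 1)).
  apply: (ler_sum_nat_bigD1 (F := fun i => - (u i * y ^ ni i)));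
    rewrite ?K_ge1 ?leqnn ?mulr_ge0 ?(ltW B_gt0) ?(ltW p0) //.
  move=> i hi iK; apply: le_trans (ler_norm _) _.
  rewrite normrN normrM (ger0_norm (exprz_ge0 _ (ltW y0))).
  by apply: ler_pM; rewrite ?exprz_ge0 ?(ltW y0) ?u_bounded ?ler_weXz2l ?niK_gt.
rewrite sumrN in split_sum.
have yK : y ^ ni K = y * y ^ (ni K - 1).
  by rewrite -[in RHS](expr1z y) -exprzDr ?unitfE ?gt_eqF // addrC subrK.
have lead : c4 * y * y ^ (ni K - 1) <= u K * y ^ ni K.
  by rewrite yK mulrA ler_pM2r // ler_pM2r.
have rest : K%:R * B * y ^ (ni K - 1) < c4 * y * y ^ (ni K - 1).
  by rewrite ltr_pM2r // [c4 * y]mulrC -ltr_pdivrMr.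
lra.
Qed.

Lemma root_lb_gt0 : 0 < root_lb.
Proof. by rewrite divr_gt0 // lt_min ltr01 divr_gt0. Qed.

Lemma root_lb_le1 : root_lb <= 1.
Proof.
have : Num.min 1 (c3 / (K%:R * B)) <= 1 by rewrite ge_min lexx.
rewrite /root_lb; lra.
Qed.

Lemma root_lb_lt : root_lb < c3 / (K%:R * B).
Proof.
have q_gt0 : 0 < c3 / (K%:R * B) by rewrite divr_gt0.
have : Num.min 1 (c3 / (K%:R * B)) <= c3 / (K%:R * B) by rewrite ge_min lexx orbT.
rewrite /root_lb; lra.
Qed.

Lemma root_ub_gt : K%:R * B / c4 < root_ub.
Proof. by rewrite ltrDr. Qed.

Lemma root_ub_ge1 : 1 <= root_ub.
Proof.
have : 0 <= K%:R * B / c4 by rewrite divr_ge0 ?ltW.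
rewrite /root_ub; lra.
Qed.

Lemma sup_neg_interval_bounds :
  root_lb <= sup [set c | 0 < c /\ forall y, 0 < y < c -> laurent y < 0] <= root_ub.
Proof.
set S := [set c | _].
have lb_in_S : S root_lb.
  split; first exact: root_lb_gt0.
  move=> y /andP[y0 y_lt]; apply: laurent_lt0; last exact: lt_trans root_lb_lt.
  by rewrite y0 (le_trans (ltW y_lt) root_lb_le1).
have ub_S : ubound S root_ub.
  move=> c [c0 Sc]; rewrite leNgt; apply/negP => ub_lt_c.
  have /Sc : 0 < root_ub < c by rewrite ub_lt_c (lt_le_trans ltr01 root_ub_ge1).
  by apply/negP; rewrite -leNgt ltW // laurent_gt0 ?root_ub_ge1 ?root_ub_gt.
apply/andP; split; last by apply: ge_sup => //; exists root_lb.
by apply: ub_le_sup => //; exists root_ub.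
Qed.

Lemma inf_pos_ray_bounds :
  root_lb <= inf [set c | forall y, c < y -> 0 < laurent y] <= root_ub.
Proof.
set S := [set c | _].
have ub_in_S : S root_ub.
  move=> y ub_lt_y; apply: laurent_gt0; first exact: le_trans root_ub_ge1 (ltW _).
  exact: lt_trans root_ub_gt _.
have lb_S : lbound S root_lb.
  move=> c Sc; rewrite leNgt; apply/negP => c_lt_lb.
  pose y := (Num.max c 0 + root_lb) / 2.
  have [lb0 lb1] := (root_lb_gt0, root_lb_le1).
  have cm : c <= Num.max c 0 by rewrite le_max lexx.
  have m0 : 0 <= Num.max c 0 by rewrite le_max lexx orbT.
  have mlb : Num.max c 0 < root_lb by rewrite gt_max c_lt_lb.
  have y_gt0 : 0 < y by rewrite /y; lra.
  have y_lt : y < root_lb by rewrite /y; lra.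
  have /Sc : c < y by rewrite /y; lra.
  apply/negP; rewrite -leNgt ltW // laurent_lt0 ?y_gt0 ?(le_trans (ltW y_lt)) //.
  exact: lt_trans root_lb_lt.
apply/andP; split; first by apply: lb_le_inf => //; exists root_ub.
by apply: ge_inf => //; exists root_lb.
Qed.

End LaurentSums.

Section NetBounds.
Variables (R : realType) (n : nat) (Omega : set 'rV[R]_n) (K : nat) (ni : nat -> int).
Variables (b : nat -> R -> 'rV[R]_n -> R) (rho : R -> 'rV[R]_n -> R) (e B c3 c4 c5 : R).
Hypothesis closure_Omega_ne : closure Omega !=set0.
Hypothesis K_ge1 : (1 <= K)%N.
Hypothesis ni_inj : forall i j, (1 <= i <= K)%N -> (1 <= j <= K)%N ->
  ni i = ni j -> i = j.
Hypothesis ni1_min : ni 1%N < 0 /\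
  forall i, (1 <= i <= K)%N -> ni i < 0 -> ni 1%N <= ni i.
Hypothesis niK_max : 0 < ni K /\
  forall i, (1 <= i <= K)%N -> 0 < ni i -> ni i <= ni K.
Hypotheses (B_gt0 : 0 < B) (c3_gt0 : 0 < c3) (c4_gt0 : 0 < c4) (c5_gt0 : 0 < c5).
Hypothesis b_bounded : forall i, (1 <= i <= K)%N ->
  forall x, closure Omega x -> `|b i e x| <= B.
Hypothesis rho_bounded : forall x, closure Omega x -> `|rho e x| <= B.
Hypothesis b1_neg : forall x, closure Omega x -> b 1%N e x <= - c3.
Hypothesis bK_pos : forall x, closure Omega x -> c4 <= b K e x.
Hypothesis rho_pos : forall x, closure Omega x -> c5 <= rho e x.

Let K_range : (1 <= K <= K)%N. Proof. by rewrite K_ge1 leqnn. Qed.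
Let one_range : (1 <= 1 <= K)%N. Proof. by rewrite K_ge1. Qed.

Let image_ne i : [set b i e x | x in closure Omega] !=set0.
Proof. by have [x0 cx0] := closure_Omega_ne; exists (b i e x0), x0. Qed.

Lemma alpha'_bounds : root_lb K B c3 <= alpha' Omega K ni b e <= root_ub K B c4.
Proof.
have [x0 cx0] := closure_Omega_ne.
apply: (sup_neg_interval_bounds (u := fun i => sup_on (closure Omega) (b i e))) => //.
- move=> i hi; apply: norm_sup_le => [|_ [x cx <-]]; [exact: ltW | exact: b_bounded].
- by apply: ge_sup => // _ [x cx <-]; exact: b1_neg.
- apply: le_trans (bK_pos cx0) (ub_le_sup _ _); last by exists x0.
  exists B => _ [x cx <-]; exact: le_trans (ler_norm _) (b_bounded K_range cx).
Qed.

Lemma beta'_bounds : root_lb K B c3 <= beta' Omega K ni b e <= root_ub K B c4.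
Proof.
have [x0 cx0] := closure_Omega_ne.
apply: (inf_pos_ray_bounds (u := fun i => inf_on (closure Omega) (b i e))) => //.
- move=> i hi; apply: norm_inf_le => [|_ [x cx <-]]; [exact: ltW | exact: b_bounded].
- apply: le_trans (ge_inf _ _) (b1_neg cx0); last by exists x0.
  exists (- B) => _ [x cx <-].
  by have := b_bounded one_range cx; rewrite ler_norml => /andP[].
- by apply: lb_le_inf => // _ [x cx <-]; exact: bK_pos.
Qed.

Let bdry_closure x : bdry Omega x -> closure Omega x. Proof. by case. Qed.

(* An empty boundary would give the junk value [inf set0 = 0]. *)
Lemma inf_on_bdry_rho :
  inf_on (bdry Omega) (rho e) = 0 \/ c5 <= inf_on (bdry Omega) (rho e).
Proof.
have [ne|empty] := pselect ([set rho e x | x in bdry Omega] !=set0).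
  by right; apply: lb_le_inf => // _ [x /bdry_closure cx <-]; exact: rho_pos.
left; rewrite /inf_on (_ : [set _ | _ in _] = set0) ?inf0 //.
by apply/seteqP; split => // y Ey; apply: empty; exists y.
Qed.

Lemma sup_on_bdry_rho_le : sup_on (bdry Omega) (rho e) <= B.
Proof.
apply: le_trans (ler_norm _) (norm_sup_le (ltW B_gt0) _).
by move=> _ [x /bdry_closure cx <-]; exact: rho_bounded.
Qed.

Lemma alpha_net_bounds :
  (alpha_net Omega K ni b rho e = 0 \/
     Num.min (root_lb K B c3) c5 <= alpha_net Omega K ni b rho e) /\
  alpha_net Omega K ni b rho e <= root_ub K B c4 + B.
Proof.
have /andP[lb_alpha' alpha'_ub] := alpha'_bounds.
have alpha'_gt0 : 0 < alpha' Omega K ni b e := lt_le_trans (root_lb_gt0 K_ge1 B_gt0 c3_gt0) lb_alpha'.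
rewrite /alpha_net; split.
  case: inf_on_bdry_rho => [->|c5_le]; first by left; rewrite min_r // ltW.
  by right; rewrite le_min !ge_min lb_alpha' c5_le orbT.
by rewrite ge_min (le_trans alpha'_ub) // lerDl (ltW B_gt0).
Qed.

Lemma beta_net_bounds :
  Num.min (root_lb K B c3) c5 <= beta_net Omega K ni b rho e <= root_ub K B c4 + B.
Proof.
have /andP[lb_beta' beta'_ub] := beta'_bounds.
have ub_ge1 : 1 <= root_ub K B c4 by exact: root_ub_ge1.
have sup_le := sup_on_bdry_rho_le.
rewrite /beta_net le_max ge_min lb_beta' /= ge_max (le_trans beta'_ub) ?lerDl ?(ltW B_gt0) //=.
by rewrite (le_trans sup_le) // lerDr (le_trans ler01 ub_ge1).
Qed.

End NetBounds.

Lemma EMnet_common_bound (R : realType) (n : nat) (Omega : set 'rV[R]_n) (K : nat)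
    (b : nat -> R -> 'rV[R]_n -> R) (rho : R -> 'rV[R]_n -> R) :
  (forall i, (1 <= i <= K)%N -> EMnet Omega (b i)) -> EMnet Omega rho ->
  exists a C eta : R, 0 < C /\ 0 < eta /\
    forall e, 0 < e < eta -> e <= 1 ->
      (forall i, (1 <= i <= K)%N -> forall x, closure Omega x -> `|b i e x| <= C * powR e a) /\
      (forall x, closure Omega x -> `|rho e x| <= C * powR e a).
Proof.
move=> bEM rhoEM; pose F i := if i is 0 then rho else b i.
have [|a [C [eta [C_gt0 [eta_gt0 FC]]]]] := @moderate_on_family _ _ (closure Omega) K F.
  by case=> [|i] hi; apply: EMnet_moderate_on => //; apply: bEM.
exists a, C, eta; do 2!split=> //; move=> e he e1; split.
  by move=> [|i] // /andP[_ iK]; exact: FC i.+1 iK e he e1.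
exact: FC 0%N (leq0n K) e he e1.
Qed.

Lemma invf_min_le (R : realFieldType) (x y : R) : 0 < x -> 0 < y ->
  (Num.min x y)^-1 <= x^-1 + y^-1.
Proof.
move=> x0 y0; have [xV0 yV0] : 0 < x^-1 /\ 0 < y^-1 by rewrite !invr_gt0.
by have [] := leP x y; lra.
Qed.

Lemma inv_root_lb_le (R : realType) (K : nat) (B c3 : R) : (1 <= K)%N -> 0 < B -> 0 < c3 ->
  (root_lb K B c3)^-1 <= 2 + 2 * (K%:R * B / c3).
Proof.
move=> K_ge1 B_gt0 c3_gt0; rewrite /root_lb -[K%:R * B / c3]invf_div.
set q := c3 / (K%:R * B).
have q_gt0 : 0 < q by rewrite divr_gt0 ?mulr_gt0 ?ltr0n.
have qV_gt0 : 0 < q^-1 by rewrite invr_gt0.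
by rewrite invfM invrK; have [] := leP 1 q; rewrite ?invr1; lra.
Qed.

Section ModerateRootBounds.
Variables (R : realType) (K : nat) (CB aB C3 a3 C4 a4 C5 a5 : R).
Hypotheses (K_ge1 : (1 <= K)%N) (CB_gt0 : 0 < CB) (C3_gt0 : 0 < C3) (C5_gt0 : 0 < C5).

Lemma moderate_root_ub_add :
  moderate (fun e => root_ub K (CB * powR e aB) (C4 * powR e a4) + CB * powR e aB).
Proof.
rewrite /root_ub; apply: moderate_add (moderate_pow _ _).
apply: moderate_add (moderate_cst _) _; apply: moderate_mul (moderate_inv_pow _ _).
exact: moderate_mul (moderate_cst _) (moderate_pow _ _).
Qed.

Lemma moderate_inv_min_root_lb :
  moderate (fun e => (Num.min (root_lb K (CB * powR e aB) (C3 * powR e a3)) (C5 * powR e a5))^-1).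
Proof.
pose bound e := 2 + 2 * (K%:R * (CB * powR e aB) / (C3 * powR e a3)) + (C5 * powR e a5)^-1.
apply: (moderate_le (f := bound)).
  apply: moderate_add (moderate_inv_pow _ _); apply: moderate_add (moderate_cst _) _.
  apply: moderate_mul (moderate_cst _) _; apply: moderate_mul (moderate_inv_pow _ _).
  exact: moderate_mul (moderate_cst _) (moderate_pow _ _).
exists 1 => // e /andP[e0 _] _.
have pos C a : 0 < C -> 0 < C * powR e a by move=> C0; rewrite mulr_gt0 ?powR_gt0.
set lo := Num.min _ _.
have lb_gt0 := root_lb_gt0 K_ge1 (pos _ aB CB_gt0) (pos _ a3 C3_gt0).
have lo_gt0 : 0 < lo by rewrite lt_min lb_gt0 pos.
have le_bound : lo^-1 <= bound e.
  apply: le_trans (invf_min_le lb_gt0 (pos _ a5 C5_gt0)) _.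
  by rewrite lerD2r inv_root_lb_le ?pos.
have inv_ge0 : 0 <= lo^-1 by rewrite invr_ge0 ltW.
by rewrite !ger0_norm // (le_trans inv_ge0 le_bound).
Qed.

End ModerateRootBounds.
Theorem lemma5p6 (R : realType) (n : nat) (hn : (0 < n)%N)
  (Omega : set 'rV[R]_n) (hOmega : smooth_domain Omega)
  (al : R) (hal : 0 < al < 1)
  (K : nat) (ni : nat -> int)
  (hdistinct : forall i j, (1 <= i <= K)%N -> (1 <= j <= K)%N ->
                 ni i = ni j -> i = j)
  (a : 'I_n -> 'I_n -> R -> 'rV[R]_n -> R)
  (b : nat -> R -> 'rV[R]_n -> R)
  (rho : R -> 'rV[R]_n -> R)
  (haEM : forall i j, EMnet Omega (a i j))
  (hbEM : forall i, (1 <= i <= K)%N -> EMnet Omega (b i))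
  (hrhoEM : EMnet Omega rho)
  (lam : R -> R) (C1 a1 : R) (hC1 : 0 < C1)
  (Lam : nat -> R -> R) (C2 a2 : nat -> R) (hC2 : forall k, 0 < C2 k)
  (C3 a3 C4 a4 C5 a5 : R)
  (hC3 : 0 < C3) (hC4 : 0 < C4) (hC5 : 0 < C5)
  (hsym : forall eps, 0 < eps < 1 -> forall i j x, closure Omega x ->
            a i j eps x = a j i eps x)
  (hell : forall eps, 0 < eps < 1 -> forall x, closure Omega x ->
            forall xi : 'rV[R]_n,
              lam eps * (\sum_(i < n) xi 0 i ^+ 2)
                <= \sum_(i < n) \sum_(j < n) a i j eps x * xi 0 i * xi 0 j /\
              C1 * powR eps a1 * (\sum_(i < n) xi 0 i ^+ 2)
                <= lam eps * (\sum_(i < n) xi 0 i ^+ 2))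
  (hholder : forall (k : nat) eps, 0 < eps < 1 ->
     (forall i j, (holder_norm Omega k al (a i j eps) <= (Lam k eps)%:E)%E) /\
     (forall i, (1 <= i <= K)%N ->
        (holder_norm Omega k al (b i eps) <= (Lam k eps)%:E)%E) /\
     Lam k eps <= C2 k * powR eps (a2 k))
  (hneg : exists i, (1 <= i <= K)%N /\ ni i < 0)
  (hn1 : ni 1%N < 0 /\ forall i, (1 <= i <= K)%N -> ni i < 0 -> ni 1%N <= ni i)
  (hb1 : forall eps, 0 < eps < 1 -> forall x, closure Omega x ->
           b 1%N eps x <= - (C3 * powR eps a3))
  (hpos : exists i, (1 <= i <= K)%N /\ 0 < ni i)
  (hnK : 0 < ni K /\ forall i, (1 <= i <= K)%N -> 0 < ni i -> ni i <= ni K)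
  (hbK : forall eps, 0 < eps < 1 -> forall x, closure Omega x ->
           C4 * powR eps a4 <= b K eps x)
  (hrho : forall eps, 0 < eps < 1 -> forall x, closure Omega x ->
           C5 * powR eps a5 <= rho eps x) :
  moderate (alpha_net Omega K ni b rho) /\
  moderate (beta_net Omega K ni b rho) /\
  moderate (fun eps => (alpha_net Omega K ni b rho eps)^-1) /\
  moderate (fun eps => (beta_net Omega K ni b rho eps)^-1).
Proof.
have K_ge1 : (1 <= K)%N by case: hneg => i [/andP[i1 iK] _]; exact: leq_trans iK.
have Omega_ne : closure Omega !=set0.
  by case: hOmega => _ [[x Ox] _]; exists x; exact: subset_closure.
set alpha := alpha_net Omega K ni b rho; set beta := beta_net Omega K ni b rho.
have [aB [CB [etaB [CB_gt0 [etaB_gt0 bounded]]]]] := EMnet_common_bound hbEM hrhoEM.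
pose lo e := Num.min (root_lb K (CB * powR e aB) (C3 * powR e a3)) (C5 * powR e a5).
pose hi e := root_ub K (CB * powR e aB) (C4 * powR e a4) + CB * powR e aB.
have eta_gt0 : 0 < Num.min etaB 1 by rewrite lt_min etaB_gt0 ltr01.
have at_eps e : 0 < e < Num.min etaB 1 -> [/\ 0 < lo e,
    (alpha e = 0 \/ lo e <= alpha e) /\ alpha e <= hi e & lo e <= beta e <= hi e].
  move=> /andP[e0]; rewrite lt_min => /andP[e_etaB e1].
  have [b_bdd rho_bdd] := bounded e (ltac:(by rewrite e0)) (ltW e1).
  have e01 : 0 < e < 1 by rewrite e0.
  have pos C p : 0 < C -> 0 < C * powR e p by move=> C0; rewrite mulr_gt0 ?powR_gt0.
  split; first by rewrite lt_min root_lb_gt0 ?pos.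
    by apply: alpha_net_bounds; rewrite ?pos //; [exact: hb1 | exact: hbK | exact: hrho].
  by apply: beta_net_bounds; rewrite ?pos //; [exact: hb1 | exact: hbK].
have sandwich := moderate_sandwich eta_gt0 (moderate_root_ub_add K CB aB C4 a4)
  (moderate_inv_min_root_lb aB a3 a5 K_ge1 CB_gt0 hC3 hC5).
have [mA mAi] : moderate alpha /\ moderate (fun e => (alpha e)^-1).
  by apply: sandwich => e /at_eps[lo_gt0 [] ? ? _].
have [mB mBi] : moderate beta /\ moderate (fun e => (beta e)^-1).
  by apply: sandwich => e /at_eps[lo_gt0 _ /andP[? ?]]; split => //; right.
by do !split.
Qed.
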